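(* Let $p\in\{2,3\}$. Let $\rho_{X^{\mathrm B}X^{\mathrm C}BC}$ be a classical-quantum state where $X^{\mathrm B},X^{\mathrm C}$ are classical registers taking values in $\mathbb{F}_p^l$, and $B$ and $C$ are quantum registers held by Bob and Charlie respectively. Suppose that for any measurements Bob and Charlie perform on their registers producing outputs $G^{\mathrm B},G^{\mathrm C}$, we have $\Pr[G^{\mathrm B}=X^{\mathrm B}\wedge G^{\mathrm C}=X^{\mathrm C}]\le\delta$. Let $\mathsf{r}^{\mathrm B},\mathsf{r}^{\mathrm C}$ be independent and uniformly distributed in $\mathbb{F}_p^l$ (independent of the state), given to Bob and Charlie respectively, who then perform measurements on their quantum registers depending on $\mathsf r^{\mathrm B}$ and $\mathsf r^{\mathrm C}$ respectively, producing outputs $G^{\mathrm B}(\mathsf r^{\mathrm B}),G^{\mathrm C}(\mathsf r^{\mathrm C})\in\mathbb F_p$. Then \[\Pr\left[\bigvee_{\substack{j,k\in\mathbb F_p:\\ j+k=0 \bmod p}}\left(G^{\mathrm B}(\mathsf r^{\mathrm B})=X^{\mathrm B}\cdot\mathsf r^{\mathrm B}+j\right)\wedge\left(G^{\mathrm C}(\mathsf r^{\mathrm C})=X^{\mathrm C}\cdot\mathsf r^{\mathrm C}+k\right)\right]\le\frac1p+O(\delta^{1/3}),\] where the probability is over $X^{\mathrm B}X^{\mathrm C}$, $\mathsf r^{\mathrm B}\mathsf r^{\mathrm C}$ and the measurements, and $\cdot$ denotes the inner product over $\mathbb F_p$.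
   Context: Bob and Charlie act on their own registers only and do not communicate. The constant in $O(\cdot)$ is absolute. *)

From mathcomp Require Import all_boot all_order all_algebra.
From mathcomp.real_closed Require Export mxtens.
Export Order.TTheory GRing.Theory Num.Theory.
Set Implicit Arguments. Unset Strict Implicit. Unset Printing Implicit Defensive.
Local Open Scope ring_scope.

Definition adjmx (C : numClosedFieldType) m n (A : 'M[C]_(m, n)) : 'M[C]_(n, m) :=
  (map_mx Num.conj A)^T.

Definition psd (C : numClosedFieldType) n (A : 'M[C]_n) : Prop :=
  adjmx A = A /\ forall v : 'cV[C]_n, (adjmx v *m A *m v) 0 0 \is Num.nneg.

Definition povm (C : numClosedFieldType) (I : finType) n (E : I -> 'M[C]_n) : Prop :=
  (forall i, psd (E i)) /\ \sum_(i : I) E i = 1%:M.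

(* A classical-quantum state rho = sum_x |x><x| (x) rho_x with classical
   registers (XB, XC) in T and quantum register BC = C^dB (x) C^dC:
   each rho_x is PSD (subnormalised, absorbing the probability of x),
   and the total trace is 1. *)
Definition cq_state (C : numClosedFieldType) (T : finType) dB dC
    (rho : T -> T -> 'M[C]_(dB * dC)) : Prop :=
  (forall xB xC, psd (rho xB xC)) /\ \sum_(xB : T) \sum_(xC : T) \tr (rho xB xC) = 1.

Definition dotv (F : nzRingType) l (x y : 'rV[F]_l) : F := \sum_(i < l) x 0 i * y 0 i.

(* The winning event only depends on u + v, with u = G^B - X^B.r^B and
   v = G^C - X^C.r^C, so its indicator is p^-1 sum_a w^(a (u + v)) for a
   primitive p-th root of unity w.  Averaging over r^B and r^C, the a-th term
   becomes T_a = sum_x tr(rho_x (F^B_a(x^B) (x) F^C_a(x^C))), where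
   F_a(y) = p^-l sum_(r,g) w^(a (g - y.r)) E_r(g).  T_0 = 1.  For a <> 0, by
   Parseval sum_y F_a(y)^* F_a(y) is the average over r of W_r^* W_r with
   W_r = sum_g w^(a g) E_r(g), and each W_r is a contraction; so the F_a(y)
   complete to POVMs, and Cauchy-Schwarz with the guessing bound gives
   |T_a|^2 <= delta.  Hence the winning probability is at most
   1/p + sqrt delta <= 1/p + delta^(1/3) when delta <= 1, and at most 1
   otherwise. *)

From mathcomp Require Import all_boot all_order all_algebra.
From mathcomp Require Import spectral ring.
Import Order.TTheory GRing.Theory Num.Theory.
Set Implicit Arguments. Unset Strict Implicit. Unset Printing Implicit Defensive.
Local Open Scope ring_scope.

Lemma exchange_big22 (R : nmodType) (I J K L : finType) (F : I -> J -> K -> L -> R) :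
  \sum_i \sum_j \sum_k \sum_l F i j k l = \sum_k \sum_l \sum_i \sum_j F i j k l.
Proof.
under eq_bigr do rewrite exchange_big; rewrite exchange_big.
under eq_bigr do under eq_bigr do rewrite exchange_big.
by under eq_bigr do rewrite exchange_big.
Qed.

Lemma exchange_big_in4 (R : nmodType) (A I J K L : finType) (F : A -> I -> J -> K -> L -> R) :
  \sum_a \sum_i \sum_j \sum_k \sum_l F a i j k l
  = \sum_i \sum_j \sum_k \sum_l \sum_a F a i j k l.
Proof.
rewrite exchange_big; apply: eq_bigr => i _; rewrite exchange_big; apply: eq_bigr => j _.
by rewrite exchange_big; apply: eq_bigr => k _; rewrite exchange_big.
Qed.

Lemma sqr_le_cube (R : numDomainType) (s c : R) :
  0 <= s -> 0 <= c -> c <= 1 -> s ^+ 2 <= c ^+ 3 -> s <= c.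
Proof.
move=> s_ge0 c_ge0 c_le1 s2_le; rewrite -ler_sqr ?nnegrE //; apply: le_trans s2_le _.
by rewrite exprS ler_piMl // exprn_ge0.
Qed.

Section Adjoint.
Variable C : numClosedFieldType.
Implicit Types m n k : nat.

Lemma adjmxE m n (A : 'M[C]_(m, n)) i j : adjmx A i j = (A j i)^*.
Proof. by rewrite !mxE. Qed.

Lemma adjmxK m n (A : 'M[C]_(m, n)) : adjmx (adjmx A) = A.
Proof. by apply/matrixP => i j; rewrite !adjmxE conjCK. Qed.

Lemma adjmxM m n k (A : 'M[C]_(m, n)) (B : 'M[C]_(n, k)) :
  adjmx (A *m B) = adjmx B *m adjmx A.
Proof.
apply/matrixP => i j; rewrite adjmxE !mxE rmorph_sum; apply: eq_bigr => l _.
by rewrite !adjmxE rmorphM mulrC.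
Qed.

Lemma adjmxD m n (A B : 'M[C]_(m, n)) : adjmx (A + B) = adjmx A + adjmx B.
Proof. by apply/matrixP => i j; rewrite !adjmxE !mxE rmorphD. Qed.

Lemma adjmxN m n (A : 'M[C]_(m, n)) : adjmx (- A) = - adjmx A.
Proof. by apply/matrixP => i j; rewrite !adjmxE !mxE rmorphN. Qed.

Lemma adjmxZ m n a (A : 'M[C]_(m, n)) : adjmx (a *: A) = a^* *: adjmx A.
Proof. by apply/matrixP => i j; rewrite !adjmxE !mxE rmorphM. Qed.

Lemma adjmx_sum m n (I : Type) (r : seq I) (P : pred I) (F : I -> 'M[C]_(m, n)) :
  adjmx (\sum_(i <- r | P i) F i) = \sum_(i <- r | P i) adjmx (F i).
Proof.
apply/matrixP => i j; rewrite adjmxE !summxE rmorph_sum.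
by apply: eq_bigr => l _; rewrite adjmxE.
Qed.

Lemma adjmx1 n : adjmx (1%:M : 'M[C]_n) = 1%:M.
Proof. by apply/matrixP => i j; rewrite adjmxE !mxE eq_sym rmorph_nat. Qed.

Lemma adjmx_delta m n i j : adjmx (delta_mx i j : 'M[C]_(m, n)) = delta_mx j i.
Proof. by apply/matrixP => a b; rewrite !mxE rmorph_nat; do 2!case: eqP. Qed.

Lemma mxtrace_adj n (A : 'M[C]_n) : \tr (adjmx A) = (\tr A)^*.
Proof. by rewrite /mxtrace rmorph_sum; apply: eq_bigr => i _; rewrite adjmxE. Qed.

Lemma adjmx_tens m n k l (A : 'M[C]_(m, n)) (B : 'M[C]_(k, l)) :
  adjmx (A *t B) = adjmx A *t adjmx B.
Proof. by rewrite /adjmx map_mxT trmx_tens. Qed.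

Lemma tensmx_suml m n k l (I : Type) (r : seq I) (P : pred I)
    (F : I -> 'M[C]_(m, n)) (B : 'M[C]_(k, l)) :
  (\sum_(i <- r | P i) F i) *t B = \sum_(i <- r | P i) (F i *t B).
Proof.
apply/matrixP => i j; rewrite !mxE !summxE mulr_suml.
by apply: eq_bigr => s _; rewrite !mxE.
Qed.

Lemma tensmx_sumr m n k l (I : Type) (r : seq I) (P : pred I)
    (A : 'M[C]_(m, n)) (F : I -> 'M[C]_(k, l)) :
  A *t (\sum_(i <- r | P i) F i) = \sum_(i <- r | P i) (A *t F i).
Proof.
apply/matrixP => i j; rewrite !mxE !summxE mulr_sumr.
by apply: eq_bigr => s _; rewrite !mxE.
Qed.

Lemma tensmxZl m n k l a (A : 'M[C]_(m, n)) (B : 'M[C]_(k, l)) :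
  (a *: A) *t B = a *: (A *t B).
Proof. by apply/matrixP => i j; rewrite !mxE mulrA. Qed.

Lemma tensmxZr m n k l a (A : 'M[C]_(m, n)) (B : 'M[C]_(k, l)) :
  A *t (a *: B) = a *: (A *t B).
Proof. by apply/matrixP => i j; rewrite !mxE mulrCA. Qed.

Lemma tensmxDl m n k l (A A' : 'M[C]_(m, n)) (B : 'M[C]_(k, l)) :
  (A + A') *t B = A *t B + A' *t B.
Proof. by apply/matrixP => i j; rewrite !mxE mulrDl. Qed.

Lemma tensmxDr m n k l (A : 'M[C]_(m, n)) (B B' : 'M[C]_(k, l)) :
  A *t (B + B') = A *t B + A *t B'.
Proof. by apply/matrixP => i j; rewrite !mxE mulrDr. Qed.

Lemma tensmx11 m n : (1%:M : 'M[C]_m) *t (1%:M : 'M[C]_n) = 1%:M.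
Proof.
apply/matrixP => i j.
case: (mxtens_indexP i) => i1 i2; case: (mxtens_indexP j) => j1 j2.
rewrite tensmxE !mxE (inj_eq (can_inj (@mxtens_indexK m n))) xpair_eqE.
by case: (i1 == j1); case: (i2 == j2); rewrite ?mulr1 ?mulr0.
Qed.

Lemma mxtrace_tens_sum m n (I J K L : finType) (R : 'M[C]_(m * n))
    (X : I -> J -> 'M[C]_m) (Y : K -> L -> 'M[C]_n) :
  \tr (R *m ((\sum_i \sum_j X i j) *t (\sum_k \sum_l Y k l)))
  = \sum_i \sum_j \sum_k \sum_l \tr (R *m (X i j *t Y k l)).
Proof.
rewrite tensmx_suml mulmx_sumr raddf_sum; apply: eq_bigr => i _ /=.
rewrite tensmx_suml mulmx_sumr raddf_sum; apply: eq_bigr => j _ /=.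
rewrite tensmx_sumr mulmx_sumr raddf_sum; apply: eq_bigr => k _ /=.
by rewrite tensmx_sumr mulmx_sumr raddf_sum.
Qed.

End Adjoint.

Section PositiveSemidefinite.
Variable C : numClosedFieldType.
Implicit Types m n k : nat.

Lemma psd_adjmxM m n (M : 'M[C]_(m, n)) : psd (adjmx M *m M).
Proof.
split=> [|v]; first by rewrite adjmxM adjmxK.
rewrite mulmxA -adjmxM -mulmxA nnegrE mxE.
by apply: sumr_ge0 => i _; rewrite adjmxE mulrC mul_conjC_ge0.
Qed.

Lemma psd1 n : psd (1%:M : 'M[C]_n).
Proof. by rewrite -(mulmx1 1%:M) -{1}adjmx1; apply: psd_adjmxM. Qed.

Lemma psd0 n : psd (0 : 'M[C]_n).
Proof. by have := psd_adjmxM (0 : 'M[C]_n); rewrite mulmx0. Qed.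

Lemma psdD n (A B : 'M[C]_n) : psd A -> psd B -> psd (A + B).
Proof.
move=> [hA pA] [hB pB]; split=> [|v]; first by rewrite adjmxD hA hB.
by rewrite mulmxDr mulmxDl mxE rpredD.
Qed.

Lemma psdZ n a (A : 'M[C]_n) : 0 <= a -> psd A -> psd (a *: A).
Proof.
move=> a0 [hA pA]; split=> [|v]; first by rewrite adjmxZ hA geC0_conj.
by rewrite -scalemxAr -scalemxAl mxE rpredM.
Qed.

Lemma psd_sum n (I : Type) (r : seq I) (P : pred I) (F : I -> 'M[C]_n) :
  (forall i, P i -> psd (F i)) -> psd (\sum_(i <- r | P i) F i).
Proof. by move=> hF; apply: big_ind => //; [apply: psd0 | apply: psdD]. Qed.

Lemma psd_factor n (A : 'M[C]_n) : psd A -> exists S : 'M[C]_n, A = adjmx S *m S.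
Proof.
case=> Aherm Apos.
have /hermitian_normalmx/orthomx_spectralP A_eq : A \is hermsymmx.
  by apply/is_hermitianmxP; rewrite expr0 scale1r -map_trmx -{1}Aherm.
set P := spectralmx A in A_eq; set d := spectral_diag A in A_eq.
have P_unitary : P \is unitarymx by apply: spectral_unitarymx.
have P_inv : invmx P = adjmx P by rewrite invmx_unitary // /adjmx map_trmx.
rewrite P_inv in A_eq.
have PP : P *m adjmx P = 1%:M by rewrite -P_inv mulmxV ?unitarymx_unit.
have d_ge0 i : 0 <= d 0 i.
  have := Apos (adjmx P *m delta_mx i 0); rewrite nnegrE adjmxM adjmxK A_eq adjmx_delta.
  rewrite !mulmxA -!(mulmxA _ P) PP !mulmx1 -rowE -colE !mxE eqxx.
  by rewrite mulr1n.
pose D := diag_mx (map_mx sqrtC d).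
have D_adj : adjmx D = D.
  apply/matrixP => i j; rewrite adjmxE !mxE eq_sym.
  by case: eqP => [->|_]; rewrite ?mulr0n ?rmorph0 // mulr1n geC0_conj ?sqrtC_ge0.
exists (D *m P); rewrite adjmxM D_adj A_eq !mulmxA -(mulmxA _ D D) mul_diag_mx.
congr (_ *m _ *m _); apply/matrixP => i j; rewrite !mxE.
by case: eqP => [->|_]; rewrite ?mulr0n ?mulr0 // mulr1n -expr2 sqrtCK.
Qed.

Lemma psd_tens m n (X : 'M[C]_m) (Y : 'M[C]_n) : psd X -> psd Y -> psd (X *t Y).
Proof.
move=> /psd_factor [S ->] /psd_factor [T ->].
by rewrite -tensmx_mul -adjmx_tens; apply: psd_adjmxM.
Qed.

Lemma psd_congr m n (A : 'M[C]_(m, n)) (rho : 'M[C]_n) :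
  psd rho -> psd (A *m rho *m adjmx A).
Proof.
case=> rho_herm rho_pos; split=> [|v]; first by rewrite !adjmxM adjmxK rho_herm mulmxA.
by have := rho_pos (adjmx A *m v); rewrite adjmxM adjmxK !mulmxA.
Qed.

Lemma mxtrace_psd_ge0 n (A : 'M[C]_n) : psd A -> 0 <= \tr A.
Proof.
case=> _ A_pos; apply: sumr_ge0 => i _.
by have := A_pos (delta_mx i 0); rewrite nnegrE adjmx_delta -rowE -colE !mxE.
Qed.

Lemma mxtrace_mulmx_psd_ge0 n (A B : 'M[C]_n) : psd A -> psd B -> 0 <= \tr (A *m B).
Proof.
move=> A_psd /psd_factor [S ->].
by rewrite mulmxA mxtrace_mulC mulmxA; apply/mxtrace_psd_ge0/psd_congr.
Qed.

Definition trform m n (rho : 'M[C]_n) (A B : 'M[C]_(m, n)) : C :=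
  \tr (A *m rho *m adjmx B).

Lemma trform_ge0 m n (rho : 'M[C]_n) (A : 'M[C]_(m, n)) : psd rho -> 0 <= trform rho A A.
Proof. by move=> rho_psd; apply/mxtrace_psd_ge0/psd_congr. Qed.

Lemma trform_sym m n (rho : 'M[C]_n) (A B : 'M[C]_(m, n)) : adjmx rho = rho ->
  trform rho B A = (trform rho A B)^*.
Proof. by move=> rho_herm; rewrite /trform -mxtrace_adj !adjmxM adjmxK rho_herm mulmxA. Qed.

Lemma trform_expand m n (rho : 'M[C]_n) (A B : 'M[C]_(m, n)) z :
  trform rho (A - z *: B) (A - z *: B) =
  trform rho A A - z^* * trform rho A B - z * trform rho B A
    + z * z^* * trform rho B B.
Proof.
rewrite /trform adjmxD adjmxN adjmxZ !mulmxDl !mulmxDr !mulNmx !mulmxN.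
by rewrite -!scalemxAl -!scalemxAr !mxtraceD !raddfN /= !mxtraceZ; ring.
Qed.

(* Expanding [trform rho (A - u B) (A - u B) >= 0] with the phase [u = t / |t|] of
   [t = trform rho A B]; this is Cauchy-Schwarz in AM-GM form. *)
Lemma trform_norm_le m n (rho : 'M[C]_n) (A B : 'M[C]_(m, n)) : psd rho ->
  2 * `|trform rho A B| <= trform rho A A + trform rho B B.
Proof.
move=> rho_psd; set t := trform rho A B.
have AA_ge0 := trform_ge0 A rho_psd; have BB_ge0 := trform_ge0 B rho_psd.
have [->|t_neq0] := eqVneq t 0; first by rewrite normr0 mulr0 addr_ge0.
have nt_neq0 : `|t| != 0 by rewrite normr_eq0.
pose u := t / `|t|.
have uc : u^* = t^* / `|t|.
  by rewrite /u fmorph_div /= conj_normC.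
have uu : u * u^* = 1 by rewrite uc mulrACA -normCK -invfM -expr2 divff ?sqrf_eq0.
have ut : u^* * t = `|t| by rewrite uc mulrAC [_ * t]mulrC -normCK expr2 mulfK.
have tBA : trform rho B A = t^* := trform_sym A B (proj1 rho_psd).
have := trform_ge0 (A - u *: B) rho_psd.
rewrite trform_expand tBA -/t uu mul1r ut.
have -> : u * t^* = `|t| by rewrite -[u]conjCK -rmorphM ut /= conj_normC.
suff -> : trform rho A A - `|t| - `|t| + trform rho B B
          = trform rho A A + trform rho B B - 2 * `|t| by rewrite subr_ge0.
by ring.
Qed.

Lemma trform_sumr m n (I : finType) (F : I -> 'M[C]_n) (A B : 'M[C]_(m, n)) :
  trform (\sum_i F i) A B = \sum_i trform (F i) A B.
Proof. by rewrite /trform mulmx_sumr mulmx_suml raddf_sum. Qed.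

Lemma trformBr m n (X Y : 'M[C]_n) (A B : 'M[C]_(m, n)) :
  trform (X - Y) A B = trform X A B - trform Y A B.
Proof. by rewrite /trform mulmxBr mulmxBl raddfB. Qed.

Lemma psd_trformP n (A : 'M[C]_n) :
  adjmx A = A -> (forall a : 'rV[C]_n, 0 <= trform A a a) -> psd A.
Proof.
move=> A_herm A_pos; split=> // v.
by have := A_pos (adjmx v); rewrite /trform adjmxK trace_mx11.
Qed.

End PositiveSemidefinite.

Section Contractions.
Variable C : numClosedFieldType.
Implicit Types m n : nat.

(* With [b = a W^*], [|b|^2 = sum_i c_i trform (B i) b a]; bounding each term by
   [trform_norm_le] and summing over the POVM gives [2 |b|^2 <= |b|^2 + |a|^2]. *)
Lemma povm_phase_contraction (I : finType) n (B : I -> 'M[C]_n) (c : I -> C) :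
  povm B -> (forall i, `|c i| = 1) ->
  let W := \sum_i c i *: B i in psd (1%:M - adjmx W *m W).
Proof.
move=> [B_psd B_sum] c_unit W; apply: psd_trformP => [|a].
  by rewrite adjmxD adjmxN adjmx1 adjmxM adjmxK.
set b := a *m adjmx W.
have bW : trform 1%:M b b = \sum_i c i * trform (B i) b a.
  rewrite /trform mulmx1 adjmxM adjmxK mulmxA /W mulmx_sumr mulmx_suml raddf_sum.
  by apply: eq_bigr => i _ /=; rewrite -scalemxAr -scalemxAl mxtraceZ.
have sum_povm (x : 'rV[C]_n) : trform 1%:M x x = \sum_i trform (B i) x x.
  by rewrite -B_sum trform_sumr.
have bb_le : 2 * `|trform 1%:M b b| <= trform 1%:M b b + trform 1%:M a a.
  rewrite {1}bW !sum_povm -big_split /=.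
  apply: le_trans (ler_wpM2l (ler0n _ 2) (ler_norm_sum _ _ _)) _.
  rewrite mulr_sumr; apply: ler_sum => i _.
  by rewrite normrM c_unit mul1r; apply: trform_norm_le.
rewrite trformBr subr_ge0.
have -> : trform (adjmx W *m W) a a = trform 1%:M b b.
  by rewrite /trform mulmx1 adjmxM adjmxK !mulmxA.
by move: bb_le; rewrite (ger0_norm (trform_ge0 b (psd1 C n))) mulr_natl mulr2n lerD2l.
Qed.

Definition contractive (I : finType) m n (K : I -> 'M[C]_(m, n)) : Prop :=
  psd (1%:M - \sum_i adjmx (K i) *m K i).

Lemma contractive_povm (I : finType) (i0 : I) m n (K : I -> 'M[C]_(m, n)) :
  contractive K ->
  povm (fun i => adjmx (K i) *m K i + (i == i0)%:R *: (1%:M - \sum_j adjmx (K j) *m K j)).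
Proof.
move=> K_contr; split=> [i|].
  by apply: psdD; [apply: psd_adjmxM | apply: psdZ].
set R := 1%:M - _; rewrite big_split /=.
have -> : \sum_i (i == i0)%:R *: R = R.
  by rewrite (bigD1 i0) //= eqxx scale1r big1 ?addr0 // => i /negPf ->; rewrite scale0r.
by rewrite addrC subrK.
Qed.

Definition joint_guess (T : finType) dB dC (rho : T -> T -> 'M[C]_(dB * dC))
    (X : T -> 'M[C]_dB) (Y : T -> 'M[C]_dC) : C :=
  \sum_xB \sum_xC \tr (rho xB xC *m (X xB *t Y xC)).

Section GuessingBound.
Variables (T : finType) (dB dC : nat) (rho : T -> T -> 'M[C]_(dB * dC)) (delta : C).
Hypothesis rho_cq : cq_state rho.
Hypothesis guess_le : forall (EB : T -> 'M[C]_dB) (EC : T -> 'M[C]_dC),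
  povm EB -> povm EC -> joint_guess rho EB EC <= delta.

Lemma joint_guess_ge0 (X : T -> 'M[C]_dB) (Y : T -> 'M[C]_dC) :
  (forall x, psd (X x)) -> (forall y, psd (Y y)) -> 0 <= joint_guess rho X Y.
Proof.
move=> X_psd Y_psd; apply: sumr_ge0 => xB _; apply: sumr_ge0 => xC _.
by apply: mxtrace_mulmx_psd_ge0; [apply: rho_cq.1 | apply: psd_tens].
Qed.

Lemma guess_bound_ge0 (x0 : T) : 0 <= delta.
Proof.
pose E d (x : T) := (x == x0)%:R *: (1%:M : 'M[C]_d).
have E_povm d : povm (E d).
  split=> [x|]; first by apply: psdZ => //; apply: psd1.
  by rewrite /E (bigD1 x0) //= eqxx scale1r big1 ?addr0 // => x /negPf ->; rewrite scale0r.
apply: le_trans (guess_le (E_povm dB) (E_povm dC)).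
by apply: joint_guess_ge0 => x; apply: (E_povm _).1.
Qed.

Lemma joint_guess_contractive (x0 : T) (X : T -> 'M[C]_dB) (Y : T -> 'M[C]_dC) :
  contractive X -> contractive Y -> `|joint_guess rho X Y| ^+ 2 <= delta.
Proof.
move=> X_contr Y_contr.
have EB_povm := contractive_povm x0 X_contr; have EC_povm := contractive_povm x0 Y_contr.
have [rho_psd rho_tr] := rho_cq.
set s := `|joint_guess rho X Y|; have s_ge0 : 0 <= s := normr_ge0 _.
pose m x y := \tr (rho x y *m ((adjmx (X x) *m X x) *t (adjmx (Y y) *m Y y))).
have m_le : \sum_x \sum_y m x y <= delta.
  apply: le_trans (guess_le EB_povm EC_povm); apply: ler_sum => x _; apply: ler_sum => y _.
  rewrite /m tensmxDl !tensmxDr !mulmxDr !mxtraceD -addrA lerDl.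
  have psd_defect d (R : 'M[C]_d) (t : T) : psd R -> psd ((t == x0)%:R *: R) by apply: psdZ.
  by rewrite addr_ge0 ?addr_ge0 // mxtrace_mulmx_psd_ge0 //;
    apply: psd_tens; apply: psd_adjmxM || apply: psd_defect.
have term x y :
    2 * s * `|\tr (rho x y *m (X x *t Y y))| <= s ^+ 2 * \tr (rho x y) + m x y.
  have := trform_norm_le (X x *t Y y) (s *: 1%:M) (rho_psd x y).
  rewrite /trform adjmxZ adjmx1 geC0_conj // -!scalemxAr -!scalemxAl !mulmx1 mul1mx.
  rewrite !mxtraceZ normrM ger0_norm // mulrA mxtrace_mulC -expr2 mulrA addrC.
  rewrite [\tr (_ *m adjmx _)]mxtrace_mulC mulmxA adjmx_tens tensmx_mul.
  by rewrite [\tr (_ *t _ *m _)]mxtrace_mulC.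
have : 2 * s * s <= s ^+ 2 + delta.
  apply: le_trans (_ : 2 * s * \sum_x \sum_y `|\tr (rho x y *m (X x *t Y y))| <= _).
    apply: ler_wpM2l; first by rewrite mulr_ge0.
    apply: le_trans (ler_norm_sum _ _ _) _; apply: ler_sum => x _; apply: ler_norm_sum.
  rewrite mulr_sumr.
  apply: le_trans (_ : _ <= \sum_x \sum_y (s ^+ 2 * \tr (rho x y) + m x y)) _.
    by apply: ler_sum => x _; rewrite mulr_sumr; apply: ler_sum => y _; apply: term.
  rewrite (eq_bigr _ (fun x _ => big_split _ _ _ _ _)) big_split /= lerD //.
  by under eq_bigr do rewrite -mulr_sumr; rewrite -mulr_sumr rho_tr mulr1.
by rewrite -mulrA -expr2 mulr_natl mulr2n lerD2l.
Qed.

End GuessingBound.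

End Contractions.

Lemma root_of_unity_neq1_exists (C : numClosedFieldType) n :
  (1 < n)%N -> exists2 z : C, z ^+ n = 1 & z != 1.
Proof.
move=> n_gt1; pose q : {poly C} := \poly_(i < n) 1.
have q_size : size q = n by rewrite size_poly_eq ?oner_neq0.
have [z] : exists z, root q z by apply/closed_rootP; rewrite q_size neq_ltn n_gt1 orbT.
rewrite /root /q horner_poly => /eqP qz0.
have zn1 : z ^+ n = 1.
  by apply/eqP; rewrite -subr_eq0 subrX1 -(eq_bigr _ (fun i _ => mul1r _)) qz0 mulr0.
exists z => //; apply/eqP => z1; move: qz0; rewrite z1.
under eq_bigr do rewrite expr1n mulr1.
by rewrite sumr_const card_ord => /eqP; rewrite pnatr_eq0 => /eqP n0; rewrite n0 in n_gt1.
Qed.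

Lemma prime_root_of_unity_prim (R : idomainType) p (z : R) :
  prime p -> z ^+ p = 1 -> z != 1 -> p.-primitive_root z.
Proof.
move=> p_prime zp z_neq1; have [m z_prim m_dvd] := prim_order_exists (prime_gt0 p_prime) zp.
have [m1|m_neq1] := eqVneq m 1%N; last by rewrite -(prime_nt_dvdP p_prime m_neq1 m_dvd).
by move: z_prim; rewrite m1 => /prim_expr_order; rewrite expr1 => /eqP; rewrite (negPf z_neq1).
Qed.

Lemma prime_prim_root_exists (C : numClosedFieldType) p :
  prime p -> exists z : C, p.-primitive_root z.
Proof.
move=> p_prime; have [z zp z_neq1] := root_of_unity_neq1_exists C (prime_gt1 p_prime).
by exists z; apply: prime_root_of_unity_prim.
Qed.

Lemma norm_prim_root (C : numClosedFieldType) n (z : C) :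
  n.-primitive_root z -> `|z| = 1.
Proof.
move=> z_prim; apply/eqP; rewrite -(pexpr_eq1 (prim_order_gt0 z_prim)) ?normr_ge0 //.
by rewrite -normrX prim_expr_order // normr1.
Qed.

Lemma sum_char_eq0 (C : numClosedFieldType) (G : finZmodType) (f : G -> C) (g : G) :
  {morph f : x y / x + y >-> x * y} -> f g != 1 -> \sum_x f x = 0.
Proof.
move=> fD fg_neq1.
have S_fix : f g * \sum_x f x = \sum_x f x.
  by rewrite {2}(reindex_inj (addrI g)) mulr_sumr; apply: eq_bigr => x _; rewrite fD.
apply/eqP; move/eqP: S_fix; rewrite -subr_eq0 -{2}[\sum_x f x]mul1r -mulrBl.
by rewrite mulf_eq0 subr_eq0 (negPf fg_neq1).
Qed.

Section Dot.
Variables (F : comNzRingType) (l : nat).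
Implicit Types x y d : 'rV[F]_l.

Lemma dotvDl x y d : dotv (x + y) d = dotv x d + dotv y d.
Proof. by rewrite /dotv -big_split; apply: eq_bigr => i _; rewrite mxE mulrDl. Qed.

Lemma dotvBr y d d' : dotv y (d - d') = dotv y d - dotv y d'.
Proof. by rewrite /dotv -sumrB; apply: eq_bigr => i _; rewrite !mxE mulrBr. Qed.

Lemma dotv0r y : dotv y 0 = 0.
Proof. by rewrite /dotv big1 // => i _; rewrite mxE mulr0. Qed.

Lemma dotv_deltal i d : dotv (delta_mx 0 i) d = d 0 i.
Proof.
rewrite /dotv (bigD1 i) //= big1 ?addr0 => [|j /negPf j_neq]; first by rewrite mxE !eqxx mul1r.
by rewrite mxE j_neq mul0r.
Qed.

End Dot.

Section Fourier.
Variables (C : numClosedFieldType) (p : nat) (z : C).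
Hypotheses (p_prime : prime p) (z_prim : p.-primitive_root z).
Local Notation N l := ((p ^ l)%:R : C).

Definition omega (t : 'F_p) : C := z ^+ t.

Lemma omega0 : omega 0 = 1.
Proof. exact: expr0. Qed.

Lemma omegaD s t : omega (s + t) = omega s * omega t.
Proof.
rewrite /omega; have -> : nat_of_ord (s + t) = ((s + t) %% p)%N.
  by rewrite /=; congr (_ %% _)%N; apply: Fp_cast.
by rewrite (expr_mod _ (prim_expr_order z_prim)) exprD.
Qed.

Lemma omega_eq1 t : (omega t == 1) = (t == 0).
Proof.
rewrite /omega -(prim_order_dvd z_prim) /dvdn modn_small //.
by rewrite -{2}(Fp_cast p_prime) ltn_ord.
Qed.

Lemma norm_omega t : `|omega t| = 1.
Proof. by rewrite normrX (norm_prim_root z_prim) expr1n. Qed.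

Lemma omega_conj t : (omega t)^* = omega (- t).
Proof.
have omega_unit : omega t * omega (- t) = 1 by rewrite -omegaD subrr omega0.
by rewrite -[LHS]mul1r -omega_unit mulrAC -normCK norm_omega expr1n mul1r.
Qed.

Lemma sum_omega u : \sum_(a : 'F_p) omega (a * u) = (u == 0)%:R * p%:R.
Proof.
have [->|u_neq0] := eqVneq u 0.
  by under eq_bigr do rewrite mulr0 omega0; rewrite sumr_const card_Fp // mul1r.
rewrite mul0r (@sum_char_eq0 _ _ _ 1) => [//|x y|]; first by rewrite mulrDl omegaD.
by rewrite mul1r omega_eq1.
Qed.

Lemma sum_omega_dotv l a (d : 'rV['F_p]_l) : a != 0 ->
  \sum_(y : 'rV['F_p]_l) omega (a * dotv y d) = (d == 0)%:R * (p ^ l)%:R.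
Proof.
move=> a_neq0; have [->|d_neq0] := eqVneq d 0.
  under eq_bigr do rewrite dotv0r mulr0 omega0.
  by rewrite sumr_const card_mx card_Fp // mul1n mul1r.
have [i di_neq0] : exists i, d 0 i != 0.
  apply/existsP; apply: contraNT d_neq0; rewrite negb_exists => /forallP d0.
  by apply/eqP/rowP => i; rewrite mxE; apply/eqP/negbNE/d0.
rewrite mul0r (@sum_char_eq0 _ _ _ (delta_mx 0 i)) => [//|x y|].
  by rewrite dotvDl mulrDr omegaD.
by rewrite dotv_deltal omega_eq1 mulf_neq0.
Qed.

Section FourierOp.
Variables (l d : nat) (E : 'rV['F_p]_l -> 'F_p -> 'M[C]_d).
Hypothesis E_povm : forall r, povm (E r).

Lemma card_rV_Fp_neq0 : N l != 0.
Proof. by rewrite pnatr_eq0 -lt0n expn_gt0 prime_gt0. Qed.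

Definition fourier_op (a : 'F_p) (y : 'rV['F_p]_l) : 'M[C]_d :=
  (N l)^-1 *: \sum_r \sum_g omega (a * (g - dotv y r)) *: E r g.

Lemma fourier_op0 y : fourier_op 0 y = 1%:M.
Proof.
rewrite /fourier_op; under eq_bigr => r _ do
  under eq_bigr => g _ do rewrite mul0r omega0 scale1r.
under eq_bigr => r _ do rewrite (E_povm r).2.
rewrite sumr_const card_mx card_Fp // mul1n -scaler_nat scalerA.
by rewrite mulVf ?card_rV_Fp_neq0 ?scale1r.
Qed.

Definition phase_op (a : 'F_p) (r : 'rV['F_p]_l) : 'M[C]_d := \sum_g omega (a * g) *: E r g.

Lemma fourier_op_phaseE a y :
  fourier_op a y = (N l)^-1 *: \sum_r omega (- (a * dotv y r)) *: phase_op a r.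
Proof.
congr (_ *: _); apply: eq_bigr => r _; rewrite scaler_sumr; apply: eq_bigr => g _.
by rewrite scalerA -omegaD mulrBr addrC.
Qed.

Lemma fourier_op_parseval a : a != 0 ->
  \sum_y adjmx (fourier_op a y) *m fourier_op a y
  = (N l)^-1 *: \sum_r adjmx (phase_op a r) *m phase_op a r.
Proof.
move=> a_neq0; set W := phase_op a.
have N_ge0 : 0 <= (N l)^-1 by rewrite invr_ge0 ler0n.
have adj_op y :
    adjmx (fourier_op a y) = (N l)^-1 *: \sum_r omega (a * dotv y r) *: adjmx (W r).
  rewrite fourier_op_phaseE adjmxZ (geC0_conj N_ge0) adjmx_sum; congr (_ *: _).
  by apply: eq_bigr => r _; rewrite adjmxZ omega_conj opprK.
have term y : adjmx (fourier_op a y) *m fourier_op a y = \sum_r \sum_r'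
    ((N l)^-1 * (N l)^-1 * omega (a * dotv y (r - r'))) *: (adjmx (W r) *m W r').
  rewrite adj_op fourier_op_phaseE -scalemxAl -scalemxAr scalerA mulmx_suml scaler_sumr.
  apply: eq_bigr => r _; rewrite mulmx_sumr scaler_sumr; apply: eq_bigr => r' _.
  by rewrite -scalemxAl -scalemxAr !scalerA -omegaD dotvBr mulrBr.
under eq_bigr do rewrite term.
rewrite exchange_big scaler_sumr; apply: eq_bigr => r _; rewrite exchange_big /=.
under eq_bigr => r' _ do rewrite -scaler_suml -mulr_sumr sum_omega_dotv // subr_eq0.
rewrite (bigD1 r) //= eqxx big1 => [|r' /negPf]; last first.
  by rewrite eq_sym => ->; rewrite !mul0r mulr0 scale0r.
by rewrite addr0 mul1r -mulrA mulVf ?card_rV_Fp_neq0 ?mulr1.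
Qed.

Lemma fourier_op_contractive a : a != 0 -> contractive (fourier_op a).
Proof.
move=> a_neq0; rewrite /contractive fourier_op_parseval //.
have -> : 1%:M - (N l)^-1 *: \sum_r adjmx (phase_op a r) *m phase_op a r
          = (N l)^-1 *: \sum_r (1%:M - adjmx (phase_op a r) *m phase_op a r).
  rewrite sumrB sumr_const card_mx card_Fp // mul1n scalerBr -scaler_nat scalerA.
  by rewrite mulVf ?card_rV_Fp_neq0 ?scale1r.
apply: psdZ; first by rewrite invr_ge0 ler0n.
apply: psd_sum => r _; apply: povm_phase_contraction => // g; apply: norm_omega.
Qed.

End FourierOp.

Lemma exists_shift_sum0E (g h d1 d2 : 'F_p) :
  [exists j, exists k, [&& j + k == 0, g == d1 + j & h == d2 + k]]
  = (g - d1 + (h - d2) == 0).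
Proof.
apply/existsP/eqP => [[j /existsP [k /and3P [/eqP jk0 /eqP -> /eqP ->]]]|gh0].
  by rewrite ![d1 + _]addrC ![d2 + _]addrC !addrK.
exists (g - d1); apply/existsP; exists (h - d2).
by rewrite gh0 eqxx ![d1 + _]addrC ![d2 + _]addrC !subrK !eqxx.
Qed.

Lemma mxtrace_fourier_tens l dB dC (EB : 'rV['F_p]_l -> 'F_p -> 'M[C]_dB)
    (EC : 'rV['F_p]_l -> 'F_p -> 'M[C]_dC) (R : 'M[C]_(dB * dC)) a xB xC :
  \tr (R *m (fourier_op EB a xB *t fourier_op EC a xC))
  = (N l)^-1 * (N l)^-1 * \sum_rB \sum_gB \sum_rC \sum_gC
      omega (a * (gB - dotv xB rB)) * omega (a * (gC - dotv xC rC))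
      * \tr (R *m (EB rB gB *t EC rC gC)).
Proof.
rewrite /fourier_op tensmxZl tensmxZr scalerA -scalemxAr mxtraceZ mxtrace_tens_sum.
congr (_ * _); do 4!(apply: eq_bigr => ? _).
by rewrite tensmxZl tensmxZr scalerA -scalemxAr mxtraceZ.
Qed.

Lemma win_prob_fourier_at l dB dC (EB : 'rV['F_p]_l -> 'F_p -> 'M[C]_dB)
    (EC : 'rV['F_p]_l -> 'F_p -> 'M[C]_dC) (R : 'M[C]_(dB * dC)) xB xC :
  (p ^ (2 * l))%:R^-1 *
    \sum_(rB : 'rV['F_p]_l) \sum_(rC : 'rV['F_p]_l) \sum_(gB : 'F_p) \sum_(gC : 'F_p |
        [exists j : 'F_p, exists k : 'F_p,
           [&& j + k == 0, gB == dotv xB rB + j & gC == dotv xC rC + k]])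
      \tr (R *m (EB rB gB *t EC rC gC))
  = p%:R^-1 * \sum_a \tr (R *m (fourier_op EB a xB *t fourier_op EC a xC)).
Proof.
symmetry; under eq_bigr do rewrite mxtrace_fourier_tens; symmetry.
rewrite -mulr_sumr exchange_big_in4 mulrCA mulnC expnM natrX -exprVn expr2; congr (_ * _).
rewrite mulr_sumr; apply: eq_bigr => rB _; rewrite exchange_big.
do 2!(rewrite mulr_sumr; apply: eq_bigr => ? _).
rewrite mulr_sumr big_mkcond; apply: eq_bigr => gC _.
rewrite -mulr_suml exists_shift_sum0E.
under eq_bigr do rewrite -omegaD -mulrDr.
rewrite sum_omega; case: eqP => _; rewrite ?mul0r ?mulr0 // mul1r mulrA mulVf ?mul1r //.
by rewrite pnatr_eq0 -lt0n prime_gt0.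
Qed.

Definition win_prob l dB dC (rho : 'rV['F_p]_l -> 'rV['F_p]_l -> 'M[C]_(dB * dC))
    (EB : 'rV['F_p]_l -> 'F_p -> 'M[C]_dB) (EC : 'rV['F_p]_l -> 'F_p -> 'M[C]_dC) : C :=
  (p ^ (2 * l))%:R^-1 *
    \sum_(rB : 'rV['F_p]_l) \sum_(rC : 'rV['F_p]_l)
    \sum_(xB : 'rV['F_p]_l) \sum_(xC : 'rV['F_p]_l)
    \sum_(gB : 'F_p) \sum_(gC : 'F_p |
        [exists j : 'F_p, exists k : 'F_p,
           [&& j + k == 0, gB == dotv xB rB + j & gC == dotv xC rC + k]])
      \tr (rho xB xC *m (EB rB gB *t EC rC gC)).

Lemma win_prob_fourier l dB dC (rho : 'rV['F_p]_l -> 'rV['F_p]_l -> 'M[C]_(dB * dC))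
    (EB : 'rV['F_p]_l -> 'F_p -> 'M[C]_dB) (EC : 'rV['F_p]_l -> 'F_p -> 'M[C]_dC) :
  win_prob rho EB EC = p%:R^-1 * \sum_a joint_guess rho (fourier_op EB a) (fourier_op EC a).
Proof.
rewrite /win_prob /joint_guess exchange_big22; symmetry.
rewrite exchange_big; under eq_bigr do rewrite exchange_big; symmetry.
rewrite !mulr_sumr; apply: eq_bigr => xB _; rewrite !mulr_sumr; apply: eq_bigr => xC _.
by rewrite win_prob_fourier_at.
Qed.

Section WinProbability.
Variables (l dB dC : nat) (rho : 'rV['F_p]_l -> 'rV['F_p]_l -> 'M[C]_(dB * dC)).
Variables (EB : 'rV['F_p]_l -> 'F_p -> 'M[C]_dB) (EC : 'rV['F_p]_l -> 'F_p -> 'M[C]_dC).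
Hypotheses (rho_cq : cq_state rho) (EB_povm : forall r, povm (EB r))
  (EC_povm : forall r, povm (EC r)).

Lemma mxtrace_tens_povm R rB rC :
  \sum_gB \sum_gC \tr (R *m (EB rB gB *t EC rC gC)) = \tr R.
Proof.
have -> : \tr R = \tr (R *m ((\sum_gB EB rB gB) *t (\sum_gC EC rC gC))).
  by rewrite (EB_povm rB).2 (EC_povm rC).2 tensmx11 mulmx1.
rewrite tensmx_suml mulmx_sumr raddf_sum; apply: eq_bigr => gB _ /=.
by rewrite tensmx_sumr mulmx_sumr raddf_sum.
Qed.

Lemma win_prob_ge0 : 0 <= win_prob rho EB EC.
Proof.
apply: mulr_ge0; first by rewrite invr_ge0 ler0n.
do 6!(apply: sumr_ge0 => ? _).
apply: mxtrace_mulmx_psd_ge0; first exact: rho_cq.1.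
by apply: psd_tens; [apply: (EB_povm _).1 | apply: (EC_povm _).1].
Qed.

Lemma win_prob_le1 : win_prob rho EB EC <= 1.
Proof.
pose ones := \sum_(rB : 'rV['F_p]_l) \sum_(rC : 'rV['F_p]_l) (1 : C).
apply: le_trans (_ : _ <= (p ^ (2 * l))%:R^-1 * ones) _.
  apply: ler_wpM2l; first by rewrite invr_ge0 ler0n.
  apply: ler_sum => rB _; apply: ler_sum => rC _; rewrite -rho_cq.2.
  apply: ler_sum => xB _; apply: ler_sum => xC _; rewrite -(mxtrace_tens_povm _ rB rC).
  apply: ler_sum => gB _; rewrite [leLHS]big_mkcond; apply: ler_sum => gC _.
  case: ifP => // _; apply: mxtrace_mulmx_psd_ge0; first exact: rho_cq.1.
  by apply: psd_tens; [apply: (EB_povm _).1 | apply: (EC_povm _).1].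
rewrite /ones !sumr_const !card_mx card_Fp // mul1n -mulrnA -expnD addnn -mul2n.
by rewrite mulVf // pnatr_eq0 -lt0n expn_gt0 prime_gt0.
Qed.

Lemma joint_guess_fourier0 :
  joint_guess rho (fourier_op EB 0) (fourier_op EC 0) = 1.
Proof.
rewrite -rho_cq.2; apply: eq_bigr => xB _; apply: eq_bigr => xC _.
by rewrite !fourier_op0 // tensmx11 mulmx1.
Qed.

Lemma win_prob_le delta :
  (forall (XB : 'rV['F_p]_l -> 'M[C]_dB) (XC : 'rV['F_p]_l -> 'M[C]_dC),
      povm XB -> povm XC -> joint_guess rho XB XC <= delta) ->
  win_prob rho EB EC <= p%:R^-1 + 3.-root delta.
Proof.
move=> guess_le; pose T a := joint_guess rho (fourier_op EB a) (fourier_op EC a).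
set c := 3.-root delta.
have c_ge0 : 0 <= c by rewrite rootC_ge0 // (guess_bound_ge0 rho_cq guess_le 0).
have p_neq0 : p%:R != 0 :> C by rewrite pnatr_eq0 -lt0n prime_gt0.
have [c_gt1|] := boolP (1 < c).
  apply: le_trans win_prob_le1 _; rewrite -[X in X <= _]add0r.
  by rewrite lerD ?invr_ge0 ?ler0n ?ltW.
rewrite -real_leNgt ?ger0_real // => c_le1.
have T_le a : a != 0 -> `|T a| <= c.
  move=> a_neq0; apply: sqr_le_cube => //; rewrite rootCK //.
  by apply: (joint_guess_contractive rho_cq guess_le 0); apply: fourier_op_contractive.
rewrite -lerBlDl; apply: le_trans (real_ler_norm _) _.
  by rewrite rpredB ?ger0_real ?invr_ge0 ?ler0n ?win_prob_ge0.
rewrite win_prob_fourier (bigD1 0) //= joint_guess_fourier0 // mulrDr mulr1 addrAC subrr add0r.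
rewrite normrM ger0_norm ?invr_ge0 ?ler0n // ler_pdivrMl ?ltr0n ?prime_gt0 //.
apply: le_trans (ler_norm_sum _ _ _) _.
apply: le_trans (_ : _ <= \sum_(a : 'F_p) c) _.
  by rewrite [leRHS](bigD1 0) //=; apply: ler_wpDl => //; apply: ler_sum => a; apply: T_le.
by rewrite sumr_const card_ord (Fp_cast p_prime) mulr_natl.
Qed.

End WinProbability.

End Fourier.

Theorem lemma31 :
  exists K : nat,
  forall (p : nat), (p = 2 \/ p = 3)%N ->
  forall (l : nat) (C : numClosedFieldType) (dB dC : nat)
    (rho : 'rV['F_p]_l -> 'rV['F_p]_l -> 'M[C]_(dB * dC)) (delta : C),
  cq_state rho ->
  (forall (EB : 'rV['F_p]_l -> 'M[C]_dB) (EC : 'rV['F_p]_l -> 'M[C]_dC),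
      povm EB -> povm EC ->
      \sum_(xB : 'rV['F_p]_l) \sum_(xC : 'rV['F_p]_l)
         \tr (rho xB xC *m (EB xB *t EC xC)) <= delta) ->
  forall (EB : 'rV['F_p]_l -> 'F_p -> 'M[C]_dB) (EC : 'rV['F_p]_l -> 'F_p -> 'M[C]_dC),
  (forall rB, povm (EB rB)) -> (forall rC, povm (EC rC)) ->
  (p ^ (2 * l))%:R^-1 *
    \sum_(rB : 'rV['F_p]_l) \sum_(rC : 'rV['F_p]_l)
    \sum_(xB : 'rV['F_p]_l) \sum_(xC : 'rV['F_p]_l)
    \sum_(gB : 'F_p) \sum_(gC : 'F_p |
        [exists j : 'F_p, exists k : 'F_p,
           [&& j + k == 0, gB == dotv xB rB + j & gC == dotv xC rC + k]])
      \tr (rho xB xC *m (EB rB gB *t EC rC gC))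
  <= p%:R^-1 + K%:R * 3.-root delta.
Proof.
exists 1%N => p p23 l C dB dC rho delta rho_cq guess_le EB EC EB_povm EC_povm.
have p_prime : prime p by case: p23 => ->.
have [z z_prim] := prime_prim_root_exists C p_prime.
rewrite mulr1n mul1r.
exact: (win_prob_le p_prime z_prim rho_cq EB_povm EC_povm guess_le).
Qed.
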